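(* Let $i \geq 1$ be an integer and for $k \in \{1, 2, \dots, 3^i\}$ let $P^k_{C_i} = \left(\frac{k-1}{3^i}, \frac{k}{3^i}\right)$. If $m, n, s \in \{1, \dots, 3^i\}$ satisfy $s = \frac{1}{2}(m+n)$, then $P^s_{C_i} \subset M_{P^m_{C_i} \cup P^n_{C_i}}$.
   Context: For a set $A \subset \mathbb{R}$, the midpoint set of $A$ is $M_A := \left\{\frac{x+y}{2} : x, y \in A,\ x \neq y\right\}$. *)

From Stdlib Require Import Reals.
Open Scope R_scope.

Definition midpoint_set (A : R -> Prop) : R -> Prop :=
  fun z => exists x y, A x /\ A y /\ x <> y /\ z = (x + y) / 2.

Definition P_C (i k : nat) : R -> Prop :=
  fun x => (INR k - 1) / 3 ^ i < x /\ x < INR k / 3 ^ i.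

(** Two distinct points whose average is x are x + d and x - d with d <> 0.
    If m <> n, the shift d = (m - s)/3^i moves the cell of index s onto the
    cell of index m, and -d = (n - s)/3^i moves it onto the cell of index n,
    because 2s = m + n.  If m = n = s, any small d works, since the cell is a
    nonempty open interval. *)

From Stdlib Require Import Reals Lra.
Open Scope R_scope.

Lemma midpoint_set_of_symmetric_pair (A : R -> Prop) (x d : R) :
  d <> 0 -> A (x + d) -> A (x - d) -> midpoint_set A x.
Proof.
  intros Hd Hplus Hminus.
  exists (x + d), (x - d).
  repeat split; trivial; lra.
Qed.

Lemma midpoint_set_mono (A B : R -> Prop) (x : R) :
  (forall y, A y -> B y) -> midpoint_set A x -> midpoint_set B x.
Proof.
  intros AB (y & z & Ay & Az & Hyz & Hx).
  exists y, z; auto.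
Qed.

Lemma midpoint_set_open_interval (a b x : R) :
  a < x < b -> midpoint_set (fun y => a < y < b) x.
Proof.
  intros [Hax Hxb].
  set (d := Rmin (x - a) (b - x) / 2).
  assert (Hda : Rmin (x - a) (b - x) <= x - a) by apply Rmin_l.
  assert (Hdb : Rmin (x - a) (b - x) <= b - x) by apply Rmin_r.
  assert (Hd0 : 0 < Rmin (x - a) (b - x)) by (apply Rmin_glb_lt; lra).
  apply midpoint_set_of_symmetric_pair with d; unfold d; lra.
Qed.

Lemma P_C_shift (i k j : nat) (x : R) :
  P_C i k x -> P_C i j (x + (INR j - INR k) / 3 ^ i).
Proof.
  unfold P_C, Rdiv; intros [Hlo Hhi]; split; lra.
Qed.

Theorem lemma2p4 (i m n s : nat) :
  (1 <= i)%nat ->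
  (1 <= m <= 3 ^ i)%nat -> (1 <= n <= 3 ^ i)%nat -> (1 <= s <= 3 ^ i)%nat ->
  INR s = (INR m + INR n) / 2 ->
  forall x : R, P_C i s x ->
    midpoint_set (fun y => P_C i m y \/ P_C i n y) x.
Proof.
  intros _ _ _ _ Hs x Hx.
  assert (H3i : 3 ^ i <> 0) by (apply pow_nonzero; lra).
  destruct (Nat.eq_dec m n) as [<- | Hmn].
  - assert (Hsm : s = m) by (apply INR_eq; lra).
    subst s.
    apply midpoint_set_mono with (P_C i m); [tauto |].
    exact (midpoint_set_open_interval _ _ _ Hx).
  - assert (Hms : INR m - INR s <> 0)
      by (intro H0; apply Hmn, INR_eq; lra).
    apply midpoint_set_of_symmetric_pair with ((INR m - INR s) / 3 ^ i).
    + unfold Rdiv; apply Rmult_integral_contrapositive_currified;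
        [exact Hms | now apply Rinv_neq_0_compat].
    + left; now apply P_C_shift.
    + right.
      replace (x - (INR m - INR s) / 3 ^ i)
        with (x + (INR n - INR s) / 3 ^ i) by (rewrite Hs; field; exact H3i).
      now apply P_C_shift.
Qed.
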